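(* In the semi-classical setting, with $\Theta_n,\Omega_n$ the polynomials defined in the context, for every $n\ge 1$: $$W p_n' = (\Omega_n - V)p_n - a_n\Theta_n p_{n-1},\qquad W p_{n-1}' = a_n\Theta_{n-1}p_n - (\Omega_n+V)p_{n-1},$$ $$W \varepsilon_n' = (\Omega_n + V)\varepsilon_n - a_n\Theta_n \varepsilon_{n-1},\qquad W \varepsilon_{n-1}' = a_n\Theta_{n-1}\varepsilon_n - (\Omega_n-V)\varepsilon_{n-1}.$$
   Context: Let $(\mu_k)_{k\ge 0}$ be complex numbers such that all Hankel determinants $\det(\mu_{i+j})_{0\le i,j\le n}$ are nonzero; $\mathcal L(x^k)=\mu_k$; $p_n(z)=\gamma_n z^n+\cdots$ ($\gamma_n\ne0$) orthonormal: $\mathcal L(p_np_m)=\delta_{n,m}$; recurrence $a_{n+1}p_{n+1}(z)=(z-b_n)p_n(z)-a_np_{n-1}(z)$, $p_{-1}=0$, $a_n=\gamma_{n-1}/\gamma_n$. $f(z)=\sum_{k\ge0}\mu_k z^{-k-1}$ (formal series); $p^{(1)}_{n-1}$ is the polynomial part of $fp_n$ and $\varepsilon_n=fp_n-p^{(1)}_{n-1}$. Semi-classical: polynomials $W\not\equiv0,V,U$ with $Wf'=2Vf+U$. For $n\ge1$, $\Theta_n = W(\varepsilon_n p_n' - \varepsilon_n' p_n) + 2V\varepsilon_n p_n$ and $\Omega_n = a_n W(\varepsilon_{n-1}p_n' - \varepsilon_n' p_{n-1}) + a_n V(\varepsilon_{n-1}p_n + \varepsilon_n p_{n-1})$; these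 are polynomials in $z$. $\Theta_0$ is defined by the same formula with $n=0$. Primes denote $d/dz$. *)

From mathcomp Require Import all_boot all_algebra.
From mathcomp Require Import reals complex.
Set Implicit Arguments. Unset Strict Implicit. Unset Printing Implicit Defensive.
Import GRing.Theory.
Local Open Scope ring_scope.

(* Formal Laurent series in z with finitely many positive powers:
   s = sum_{k >= 0} lco s k * z^(ldeg s - k).
   Two representations denote the same series iff their coefficient
   functions [lcoef] agree (relation [lEq]). *)
Record lser (F : Type) := LSer { ldeg : nat; lco : nat -> F }.

Section Laurent.
Variable F : fieldType.
Implicit Types (s t : lser F) (q : {poly F}).

Definition lcoef s (j : int) : F :=
  if (j <= (ldeg s)%:Z) then lco s (absz ((ldeg s)%:Z - j)) else 0.

Definition mkL (N : nat) (g : int -> F) : lser F :=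
  LSer N (fun k => g (N%:Z - k%:Z)).

Definition lEq s t : Prop := forall j : int, lcoef s j = lcoef t j.

Definition ladd s t : lser F :=
  mkL (maxn (ldeg s) (ldeg t)) (fun j => lcoef s j + lcoef t j).
Definition lscale (c : F) s : lser F := LSer (ldeg s) (fun k => c * lco s k).
Definition lopp s : lser F := lscale (-1) s.
Definition lsub s t : lser F := ladd s (lopp t).
Definition lmul s t : lser F :=
  LSer (ldeg s + ldeg t) (fun k => \sum_(i < k.+1) lco s i * lco t (k - i)).
Definition lderiv s : lser F :=
  mkL (ldeg s) (fun j => (j + 1)%:~R * lcoef s (j + 1)).
Definition lpoly q : lser F :=
  mkL (size q) (fun j => if (0 <= j) then q`_(absz j) else 0).
Definition polypart s : {poly F} := \poly_(i < (ldeg s).+1) lcoef s i%:Z.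

Definition stieltjes (mu : nat -> F) : lser F :=
  LSer 0 (fun k => if k is k'.+1 then mu k' else 0).

Definition momL (mu : nat -> F) q : F := \sum_(i < size q) q`_i * mu i.

Definition hankel_nonzero (mu : nat -> F) : Prop :=
  forall n : nat, \det (\matrix_(i < n.+1, j < n.+1) mu (i + j)%N) != 0.

Definition orthonormal_ops (mu : nat -> F) (p : nat -> {poly F}) : Prop :=
  (forall n, size (p n) = n.+1) /\
  (forall n m, momL mu (p n * p m) = (n == m)%:R).

Definition acoef (p : nat -> {poly F}) (n : nat) : F :=
  lead_coef (p n.-1) / lead_coef (p n).

Definition semiclassical (mu : nat -> F) (W V U : {poly F}) : Prop :=
  lEq (lmul (lpoly W) (lderiv (stieltjes mu)))
      (ladd (lmul (lpoly (2%:R *: V)) (stieltjes mu)) (lpoly U)).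

Definition eps (mu : nat -> F) (p : nat -> {poly F}) (n : nat) : lser F :=
  let fp := lmul (stieltjes mu) (lpoly (p n)) in
  lsub fp (lpoly (polypart fp)).

Definition Theta mu p (W V : {poly F}) (n : nat) : lser F :=
  ladd (lmul (lpoly W)
          (lsub (lmul (eps mu p n) (lpoly (p n)^`()))
                (lmul (lderiv (eps mu p n)) (lpoly (p n)))))
       (lmul (lpoly (2%:R *: V)) (lmul (eps mu p n) (lpoly (p n)))).

Definition Omega mu p (W V : {poly F}) (n : nat) : lser F :=
  ladd (lscale (acoef p n) (lmul (lpoly W)
          (lsub (lmul (eps mu p n.-1) (lpoly (p n)^`()))
                (lmul (lderiv (eps mu p n)) (lpoly (p n.-1))))))
       (lscale (acoef p n) (lmul (lpoly V)
          (ladd (lmul (eps mu p n.-1) (lpoly (p n)))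
                (lmul (eps mu p n) (lpoly (p n.-1)))))).

End Laurent.

(* The key object is the Casoratian D_n = eps_{n-1} p_n - eps_n p_{n-1}.  Since
   eps_k = f p_k - pi(f p_k), where pi is the polynomial part, we have
   D_n = pi(f p_n) p_{n-1} - pi(f p_{n-1}) p_n, a polynomial.  The coefficient of
   z^(-m-1) in f p_k is L(x^m p_k), so orthonormality gives
   eps_k = z^(-k-1) / gamma_k + O(z^(-k-2)).  Hence D_n has no positive powers of z
   and its constant term is gamma_n / gamma_{n-1} = 1 / a_n: a_n D_n = 1 and D_n' = 0.
   Each of the four identities then holds for arbitrary polynomials W and V, as the
   difference of its two sides is a combination of a_n D_n - 1 and D_n' with
   coefficients in the ring of Laurent series. *)

From mathcomp Require Import all_boot all_algebra.
From mathcomp Require Import reals complex.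
From mathcomp Require Import zify.
From Stdlib Require Import Ring Setoid Morphisms.
Import GRing.Theory.
Local Open Scope ring_scope.
Set Implicit Arguments. Unset Strict Implicit. Unset Printing Implicit Defensive.

Section LaurentSeries.
Variable F : fieldType.
Implicit Types (s t u : lser F) (q r : {poly F}).

Lemma lcoef_mkL N (g : int -> F) j :
  lcoef (mkL N g) j = if j <= N%:Z then g j else 0.
Proof. by rewrite /lcoef /mkL /=; case: ifP => h //; congr g; lia. Qed.

Lemma lcoef_default s j : (ldeg s)%:Z < j -> lcoef s j = 0.
Proof. by rewrite /lcoef; case: ifP => //; lia. Qed.

Lemma lcoef_lco s k : lcoef s ((ldeg s)%:Z - k%:Z) = lco s k.
Proof. by rewrite /lcoef; case: ifP => h; [congr lco; lia | lia]. Qed.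

Lemma lcoefD s t j : lcoef (ladd s t) j = lcoef s j + lcoef t j.
Proof.
rewrite /ladd lcoef_mkL; case: ifP => h //.
by rewrite !lcoef_default ?addr0 //; lia.
Qed.

Lemma lcoefZ c s j : lcoef (lscale c s) j = c * lcoef s j.
Proof. by rewrite /lcoef /=; case: ifP; rewrite ?mulr0. Qed.

Lemma lcoefN s j : lcoef (lopp s) j = - lcoef s j.
Proof. by rewrite lcoefZ mulN1r. Qed.

Lemma lcoefB s t j : lcoef (lsub s t) j = lcoef s j - lcoef t j.
Proof. by rewrite lcoefD lcoefN. Qed.

Lemma lcoef_deriv s j : lcoef (lderiv s) j = (j + 1)%:~R * lcoef s (j + 1).
Proof.
rewrite /lderiv lcoef_mkL; case: ifP => h //.
by rewrite lcoef_default ?mulr0 //; lia.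
Qed.

Lemma lcoef_poly q j : lcoef (lpoly q) j = if 0 <= j then q`_(absz j) else 0.
Proof.
rewrite /lpoly lcoef_mkL; case: ifP => h //.
by case: ifP => h2 //; rewrite nth_default //; move: (size q) h => n h; lia.
Qed.

Lemma lcoef_poly_default q j : (size q)%:Z <= j -> lcoef (lpoly q) j = 0.
Proof.
by move=> hj; rewrite lcoef_poly ifT ?nth_default //; move: (size q) hj => n hj; lia.
Qed.

(** * Laurent series modulo [lEq] form a commutative ring *)

Lemma lEq_refl s : lEq s s. Proof. by []. Qed.
Lemma lEq_sym s t : lEq s t -> lEq t s. Proof. by move=> h j. Qed.
Lemma lEq_trans s t u : lEq s t -> lEq t u -> lEq s u.
Proof. by move=> h1 h2 j; rewrite h1. Qed.

Instance lEq_Equivalence : Equivalence (@lEq F).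
Proof. by split; [exact: lEq_refl | exact: lEq_sym | exact: lEq_trans]. Qed.

Lemma lEq_lco s t : ldeg s = ldeg t -> (forall k, lco s k = lco t k) -> lEq s t.
Proof. by move=> hd hc j; rewrite /lcoef hd hc. Qed.

Lemma lEq_shift s t m : ldeg s = (ldeg t + m)%N ->
  (forall k, (k < m)%N -> lco s k = 0) ->
  (forall k, lco s (m + k) = lco t k) -> lEq s t.
Proof.
move=> hd h0 h1 j.
have [hj|hj] := boolP (j <= (ldeg t)%:Z).
  have -> : j = (ldeg t)%:Z - (absz ((ldeg t)%:Z - j))%:Z by lia.
  rewrite lcoef_lco -h1 -lcoef_lco; congr lcoef; rewrite hd; lia.
rewrite (@lcoef_default t); last lia.
have [hj2|hj2] := boolP (j <= (ldeg s)%:Z); last by rewrite lcoef_default //; lia.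
have -> : j = (ldeg s)%:Z - (absz ((ldeg s)%:Z - j))%:Z by lia.
by rewrite lcoef_lco h0 //; lia.
Qed.

Lemma lco_mul s t k : lco (lmul s t) k = \sum_(i < k.+1) lco s i * lco t (k - i).
Proof. by []. Qed.

Lemma lmul_shift s s' t m : ldeg s = (ldeg s' + m)%N ->
  (forall k, (k < m)%N -> lco s k = 0) ->
  (forall k, lco s (m + k) = lco s' k) -> lEq (lmul s t) (lmul s' t).
Proof.
move=> hd h0 h1; apply: (@lEq_shift _ _ m).
- by rewrite /= hd; lia.
- move=> k hk; rewrite lco_mul big1 // => i _; rewrite h0 ?mul0r //.
  by have := ltn_ord i; lia.
move=> k; rewrite !lco_mul.
have -> : (m + k).+1 = (m + k.+1)%N by lia.
rewrite big_split_ord /= big1 ?add0r; last by move=> i _; rewrite h0 ?mul0r.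
by apply: eq_bigr => i _; rewrite h1; congr (_ * lco t _); lia.
Qed.

Definition lpad (N : nat) s : lser F := LSer N (fun k => lcoef s (N%:Z - k%:Z)).

Lemma lmul_pad N s t : (ldeg s <= N)%N -> lEq (lmul (lpad N s) t) (lmul s t).
Proof.
move=> hN; apply: (@lmul_shift _ _ _ (N - ldeg s)%N) => /=.
- lia.
- by move=> k hk; rewrite lcoef_default //; lia.
- by move=> k; rewrite -lcoef_lco; congr lcoef; lia.
Qed.

Lemma lmul_eql s s' t : lEq s s' -> lEq (lmul s t) (lmul s' t).
Proof.
move=> h; set N := (ldeg s + ldeg s')%N.
apply: lEq_trans (lEq_sym (@lmul_pad N _ t _)) _; first lia.
apply: lEq_trans (@lmul_pad N _ t _); last lia.
by apply: lEq_lco => // k; rewrite !lco_mul; apply: eq_bigr => i _; rewrite /= h.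
Qed.

(* [z^(-ldeg s) s] truncated to [K] terms, as a polynomial in [1/z]. *)
Definition ltrunc (K : nat) s : {poly F} := \poly_(i < K) lco s i.

Lemma lco_mul_trunc K s t k :
  (k < K)%N -> lco (lmul s t) k = (ltrunc K s * ltrunc K t)`_k.
Proof.
move=> hk; rewrite lco_mul coefM; apply: eq_bigr => i _.
by rewrite /ltrunc !coef_poly; have := ltn_ord i; case: ifP; case: ifP => //; lia.
Qed.

Lemma coefM_low (q q' r r' : {poly F}) k :
  (forall i, (i <= k)%N -> q`_i = q'`_i) -> (forall i, (i <= k)%N -> r`_i = r'`_i) ->
  (q * r)`_k = (q' * r')`_k.
Proof.
move=> hq hr; rewrite !coefM; apply: eq_bigr => i _.
by have := ltn_ord i => hi; rewrite hq ?hr //; lia.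
Qed.

Lemma lmulC s t : lEq (lmul s t) (lmul t s).
Proof.
apply: lEq_lco => [/=|k]; first by rewrite addnC.
by rewrite !(@lco_mul_trunc k.+1) // mulrC.
Qed.

Lemma lmulA s t u : lEq (lmul s (lmul t u)) (lmul (lmul s t) u).
Proof.
apply: lEq_lco => [/=|k]; first by rewrite addnA.
have coef_trunc_mul v w i : (i <= k)%N ->
    (ltrunc k.+1 (lmul v w))`_i = (ltrunc k.+1 v * ltrunc k.+1 w)`_i.
  by move=> hi; rewrite coef_poly ifT ?(@lco_mul_trunc k.+1) //; lia.
rewrite !(@lco_mul_trunc k.+1) //.
rewrite (@coefM_low _ (ltrunc k.+1 s) _ (ltrunc k.+1 t * ltrunc k.+1 u) k) //;
  last exact: coef_trunc_mul.
by rewrite mulrA; apply: coefM_low => // i hi; rewrite coef_trunc_mul.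
Qed.

Lemma lmulDl s t u : lEq (lmul (ladd s t) u) (ladd (lmul s u) (lmul t u)).
Proof.
set M := maxn (ldeg s) (ldeg t).
have padM : lEq (ladd (lmul (lpad M s) u) (lmul (lpad M t) u))
                (ladd (lmul s u) (lmul t u)).
  by move=> j; rewrite !lcoefD !lmul_pad // /M ?leq_maxl ?leq_maxr.
apply: lEq_trans padM; apply: lEq_lco => [/=|k]; first by rewrite maxnn.
rewrite lco_mul /ladd /mkL /= maxnn !lcoef_lco !lco_mul -big_split /=.
by apply: eq_bigr => i _; rewrite mulrDl.
Qed.

Definition cst (c : F) : lser F := LSer 0 (fun k => if k is 0%N then c else 0).
Definition lzero := cst 0.
Definition lone := cst 1.

Lemma lcoef_cst c j : lcoef (cst c) j = if j == 0 then c else 0.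
Proof.
have [->|hj] := eqVneq j 0; first by [].
by rewrite /lcoef /=; case: ifP => // h; case E: (absz (0 - j)) => //; lia.
Qed.

Lemma lmul_cst c s : lEq (lmul (cst c) s) (lscale c s).
Proof.
apply: lEq_lco => [//|k]; rewrite lco_mul big_ord_recl /= subn0 big1 ?addr0 //.
by move=> i _; rewrite mul0r.
Qed.

Lemma lser_ring_theory :
  ring_theory lzero lone (@ladd F) (@lmul F) (@lsub F) (@lopp F) (@lEq F).
Proof.
constructor.
- by move=> s j; rewrite lcoefD lcoef_cst; case: eqP; rewrite add0r.
- by move=> s t j; rewrite !lcoefD addrC.
- by move=> s t u j; rewrite !lcoefD addrA.
- by move=> s; apply: lEq_trans (lmul_cst _ _) _ => j; rewrite lcoefZ mul1r.
- exact: lmulC.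
- exact: lmulA.
- exact: lmulDl.
- by [].
- by move=> s j; rewrite lcoefD lcoefN lcoef_cst subrr; case: eqP.
Qed.

Instance ladd_Proper : Proper (@lEq F ==> @lEq F ==> @lEq F) (@ladd F).
Proof. by move=> s s' h t t' h' j; rewrite !lcoefD h h'. Qed.
Instance lmul_Proper : Proper (@lEq F ==> @lEq F ==> @lEq F) (@lmul F).
Proof.
move=> s s' h t t' h'; apply: lEq_trans (lmul_eql _ h) _.
apply: lEq_trans (lmulC _ _) _; apply: lEq_trans (lmulC _ _); exact: lmul_eql.
Qed.
Instance lopp_Proper : Proper (@lEq F ==> @lEq F) (@lopp F).
Proof. by move=> s s' h j; rewrite !lcoefN h. Qed.
Instance lsub_Proper : Proper (@lEq F ==> @lEq F ==> @lEq F) (@lsub F).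
Proof. by move=> s s' h t t' h' j; rewrite !lcoefB h h'. Qed.
Instance lscale_Proper c : Proper (@lEq F ==> @lEq F) (@lscale F c).
Proof. by move=> s s' h j; rewrite !lcoefZ h. Qed.
Instance lderiv_Proper : Proper (@lEq F ==> @lEq F) (@lderiv F).
Proof. by move=> s s' h j; rewrite !lcoef_deriv h. Qed.

Lemma lser_ring_eq_ext : ring_eq_ext (@ladd F) (@lmul F) (@lopp F) (@lEq F).
Proof.
by constructor; [exact: ladd_Proper | exact: lmul_Proper | exact: lopp_Proper].
Qed.

Add Ring lser_ring : lser_ring_theory (setoid lEq_Equivalence lser_ring_eq_ext).

(** * Derivation and polynomials *)

Lemma lco_deriv0 s : lco (lderiv s) 0 = 0.
Proof. by rewrite /lderiv /mkL /= lcoef_default ?mulr0 //; lia. Qed.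

Lemma lco_derivS s k : lco (lderiv s) k.+1 = ((ldeg s)%:Z - k%:Z)%:~R * lco s k.
Proof. by rewrite /lderiv /mkL /= -lcoef_lco; congr (_%:~R * lcoef _ _); lia. Qed.

Lemma lco_add s t k : ldeg s = ldeg t -> lco (ladd s t) k = lco s k + lco t k.
Proof. by move=> hd; rewrite /ladd /mkL /= -hd maxnn -!lcoef_lco hd. Qed.

Lemma lderivM s t :
  lEq (lderiv (lmul s t)) (ladd (lmul (lderiv s) t) (lmul s (lderiv t))).
Proof.
apply: lEq_lco => [/=|k]; first by rewrite maxnn.
rewrite lco_add //; case: k => [|k].
  rewrite lco_deriv0 !lco_mul !big_ord1 /=.
  by rewrite !(@lcoef_default _ (_ + 1)) ?mulr0 ?mul0r ?addr0 //; lia.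
have e1 : \sum_(i < k.+2) lco (lderiv s) i * lco t (k.+1 - i) =
   \sum_(i < k.+1) ((ldeg s)%:Z - i%:Z)%:~R * lco s i * lco t (k - i).
  rewrite big_ord_recl lco_deriv0 mul0r add0r.
  by apply: eq_bigr => i _; rewrite lift0 lco_derivS subSS.
have e2 : \sum_(i < k.+2) lco s i * lco (lderiv t) (k.+1 - i) =
   \sum_(i < k.+1) lco s i * (((ldeg t)%:Z - (k - i)%N%:Z)%:~R * lco t (k - i)).
  rewrite big_ord_recr subnn lco_deriv0 mulr0 Monoid.mulm1.
  apply: eq_bigr => i _; have hi := ltn_ord i.
  by rewrite (_ : (k.+1 - i = (k - i).+1)%N) ?lco_derivS //; lia.
rewrite !lco_mul e1 e2 lco_derivS mulr_sumr -big_split /=; apply: eq_bigr => i _.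
have hi := ltn_ord i.
have split_deg : (ldeg (lmul s t))%:Z - k%:Z
    = ((ldeg s)%:Z - i%:Z) + ((ldeg t)%:Z - (k - i)%N%:Z) by rewrite /=; lia.
rewrite split_deg.
by rewrite intrD mulrDl -!mulrA; congr (_ + _); rewrite mulrCA.
Qed.

Lemma lderivD s t : lEq (lderiv (ladd s t)) (ladd (lderiv s) (lderiv t)).
Proof. by move=> j; rewrite !(lcoefD, lcoef_deriv) mulrDr. Qed.

Lemma lderivN s : lEq (lderiv (lopp s)) (lopp (lderiv s)).
Proof. by move=> j; rewrite !(lcoefN, lcoef_deriv) mulrN. Qed.

Lemma lderiv_cst c : lEq (lderiv (cst c)) lzero.
Proof.
move=> j; rewrite lcoef_deriv !lcoef_cst.
by have [->|h] := eqVneq (j + 1) 0; rewrite ?mul0r ?mulr0; case: (j == 0).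
Qed.

Lemma lscale_cst c s : lEq (lscale c s) (lmul (cst c) s).
Proof. exact/lEq_sym/lmul_cst. Qed.

Lemma cstD a b : lEq (cst (a + b)) (ladd (cst a) (cst b)).
Proof. by move=> j; rewrite lcoefD !lcoef_cst; case: (j == 0); rewrite ?addr0. Qed.

Lemma cstM a b : lEq (cst (a * b)) (lmul (cst a) (cst b)).
Proof.
apply: lEq_trans (lEq_sym (lmul_cst _ _)) => j.
by rewrite lcoefZ !lcoef_cst; case: (j == 0); rewrite ?mulr0.
Qed.

Lemma lpolyD q r : lEq (lpoly (q + r)) (ladd (lpoly q) (lpoly r)).
Proof. by move=> j; rewrite lcoefD !lcoef_poly coefD; case: ifP; rewrite ?addr0. Qed.

Lemma lpolyZ c q : lEq (lpoly (c *: q)) (lscale c (lpoly q)).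
Proof. by move=> j; rewrite lcoefZ !lcoef_poly coefZ; case: ifP; rewrite ?mulr0. Qed.

Lemma lpolyC c : lEq (lpoly c%:P) (cst c).
Proof.
move=> j; rewrite lcoef_poly lcoef_cst coefC.
have [->|hj] := eqVneq j 0 => //.
by case: ifP => // h; case: eqP => // /eqP; rewrite absz_eq0 (negbTE hj).
Qed.

Lemma lpoly_deriv q : lEq (lderiv (lpoly q)) (lpoly q^`()).
Proof.
move=> j; rewrite lcoef_deriv !lcoef_poly coef_deriv.
case: ifP => h1; case: ifP => h2; try lia.
- rewrite (_ : absz (j + 1) = (absz j).+1); last lia.
  by rewrite -mulr_natl (_ : j + 1 = (absz j).+1%:Z) //; lia.
- by rewrite (_ : j = -1) ?mul0r //; lia.
- by rewrite mulr0.
Qed.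

Lemma lco_polyX i : lco (lpoly 'X) i = (i == 1%N)%:R :> F.
Proof.
by rewrite /lpoly /mkL /= size_polyX; case: i => [|[|[|i]]] //=; rewrite coefX.
Qed.

Definition lshift s : lser F := mkL (ldeg s + 1) (fun j => lcoef s (j - 1)).

Lemma lmulX s : lEq (lmul (lpoly 'X) s) (lshift s).
Proof.
apply: (@lEq_shift _ _ 1%N).
- by rewrite /= size_polyX; lia.
- by move=> k hk; rewrite lco_mul (_ : k = 0%N) ?big_ord1 ?lco_polyX ?mul0r //; lia.
move=> k; rewrite lco_mul !big_ord_recl !lift0 !lco_polyX mul0r add0r mul1r.
rewrite big1 ?addr0; last by move=> i _; rewrite !lift0 lco_polyX mul0r.
by rewrite /lshift /mkL /= -lcoef_lco; congr lcoef; lia.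
Qed.

Lemma lpolyMX r : lEq (lpoly ('X * r)) (lmul (lpoly 'X) (lpoly r)).
Proof.
apply: lEq_trans (lEq_sym (lmulX _)) => j.
rewrite /lshift lcoef_mkL !lcoef_poly coefXM /=.
case: ifP => h1; last by case: ifP => //; rewrite ifF //; lia.
case: ifP => h0.
  move/eqP: h0 => h0; have {}h0 : (absz j = 0)%N := h0.
  by case: ifP => // _; rewrite ifF //; lia.
move/negbT/eqP: h0 => h0; have {}h0 : (absz j <> 0)%N := h0.
rewrite (_ : absz (j - 1) = (absz j).-1); last lia.
case: ifP => h2; first by rewrite ifT //; lia.
by rewrite nth_default //; move: (size r) h2 => n h2; lia.
Qed.

Lemma lpolyM q r : lEq (lpoly (q * r)) (lmul (lpoly q) (lpoly r)).
Proof.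
elim/poly_ind: q r => [|q c IH] r.
  rewrite mul0r -polyC0; setoid_rewrite lpolyC.
  apply: lEq_trans (lEq_sym (lmul_cst _ _)) => j.
  by rewrite lcoefZ lcoef_cst mul0r; case: (j == 0).
rewrite mulrDl -mulrA mul_polyC.
setoid_rewrite lpolyD; setoid_rewrite IH; setoid_rewrite lpolyZ.
setoid_rewrite lpolyMX; setoid_rewrite lscale_cst; setoid_rewrite lpolyC.
ring.
Qed.

(** * Leading terms of products *)

Section ProductLeadingTerm.
Variables (s t : lser F) (A B : int).
Hypotheses (hA : A <= (ldeg s)%:Z) (hB : B <= (ldeg t)%:Z).
Hypothesis hs : forall j, A < j -> lcoef s j = 0.
Hypothesis ht : forall j, B < j -> lcoef t j = 0.

Let a := absz ((ldeg s)%:Z - A).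
Let b := absz ((ldeg t)%:Z - B).

Let lco_s_lt i : (i < a)%N -> lco s i = 0.
Proof. by move=> hi; rewrite -lcoef_lco hs //; rewrite /a in hi; lia. Qed.

Let lco_t_lt i : (i < b)%N -> lco t i = 0.
Proof. by move=> hi; rewrite -lcoef_lco ht //; rewrite /b in hi; lia. Qed.

Lemma lcoef_mul_above j : A + B < j -> lcoef (lmul s t) j = 0.
Proof.
move=> hj; have [hj2|hj2] := boolP (j <= (ldeg (lmul s t))%:Z); last first.
  by rewrite lcoef_default //; lia.
have -> : j = (ldeg (lmul s t))%:Z - (absz ((ldeg (lmul s t))%:Z - j))%:Z by lia.
rewrite lcoef_lco lco_mul big1 // => i _; have hi := ltn_ord i.
have [h|h] := ltnP i a; first by rewrite lco_s_lt ?mul0r.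
rewrite lco_t_lt ?mulr0 //; rewrite /= /a /b in hi hj2 h *.
by move: (nat_of_ord i) h hi => i0 h hi; lia.
Qed.

Lemma lcoef_mul_lead : lcoef (lmul s t) (A + B) = lcoef s A * lcoef t B.
Proof.
have -> : A + B = (ldeg (lmul s t))%:Z - (a + b)%N%:Z by rewrite /= /a /b; lia.
rewrite lcoef_lco lco_mul.
have ha : (a < (a + b).+1)%N by lia.
rewrite (bigD1 (Ordinal ha)) //= big1 ?addr0; last first.
  move=> i /eqP hi; have hi' : nat_of_ord i <> a by move=> e; apply: hi; apply: val_inj.
  have hi2 := ltn_ord i.
  have [h|h] := ltnP i a; first by rewrite lco_s_lt ?mul0r.
  by rewrite lco_t_lt ?mulr0 //; move: (nat_of_ord i) h hi' hi2 => i0 h hi' hi2; lia.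
by rewrite -!lcoef_lco /a /b; congr (lcoef _ _ * lcoef _ _); lia.
Qed.

End ProductLeadingTerm.

Lemma lcoef_mul_neg s t : (forall j, j < 0 -> lcoef s j = 0) ->
  (forall j, j < 0 -> lcoef t j = 0) -> forall j, j < 0 -> lcoef (lmul s t) j = 0.
Proof.
move=> hs ht j hj.
have hs' i : (ldeg s < i)%N -> lco s i = 0 by move=> hi; rewrite -lcoef_lco hs //; lia.
have ht' i : (ldeg t < i)%N -> lco t i = 0 by move=> hi; rewrite -lcoef_lco ht //; lia.
have -> : j = (ldeg (lmul s t))%:Z - (absz ((ldeg (lmul s t))%:Z - j))%:Z by lia.
rewrite lcoef_lco lco_mul big1 // => i _; have hi := ltn_ord i.
have [h|h] := leqP i (ldeg s); last by rewrite hs' ?mul0r.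
rewrite ht' ?mulr0 //=; rewrite /= in hi.
by move: (nat_of_ord i) h hi => i0 h hi; lia.
Qed.

(** * Moments and the functions of the second kind *)

Lemma size_reduce_lead (u v : {poly F}) N : (size u <= N.+1)%N -> size v = N.+1 ->
  (size (u - (u`_N / v`_N) *: v)%R <= N)%N.
Proof.
move=> hu hv; have vN : v`_N != 0.
  have : lead_coef v != 0 by rewrite lead_coef_eq0 -size_poly_eq0 hv.
  by rewrite lead_coefE hv.
apply/leq_sizeP => j hj; rewrite coefB coefZ.
have [->|hjN] := eqVneq j N; first by rewrite mulfVK // subrr.
have hj' : (N < j)%N by lia.
rewrite [u`_j]nth_default; last exact: leq_trans hu hj'.
by rewrite [v`_j]nth_default ?hv // mulr0 subr0.
Qed.

Section Moments.
Variable mu : nat -> F.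

Lemma momL_widen q N : (size q <= N)%N -> momL mu q = \sum_(i < N) q`_i * mu i.
Proof.
move=> h; rewrite /momL -(subnKC h) big_split_ord /= [X in _ = _ + X]big1 ?addr0 //.
by move=> i _; rewrite nth_default ?mul0r // leq_addr.
Qed.

Lemma momLD q r : momL mu (q + r) = momL mu q + momL mu r.
Proof.
set N := (size q + size r)%N.
rewrite !(@momL_widen _ N) /N ?leq_addr ?leq_addl //; last first.
  by apply: leq_trans (size_polyD _ _) _; rewrite geq_max leq_addr leq_addl.
by rewrite -big_split; apply: eq_bigr => i _; rewrite coefD mulrDl.
Qed.

Lemma momLZ c q : momL mu (c *: q) = c * momL mu q.
Proof.
rewrite !(@momL_widen _ (size q)) ?size_scale_leq // mulr_sumr.
by apply: eq_bigr => i _; rewrite coefZ mulrA.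
Qed.

Lemma momL0 : momL mu 0 = 0.
Proof. by rewrite /momL size_poly0 big_ord0. Qed.

Lemma lcoef_stieltjes_mul q m :
  lcoef (lmul (stieltjes mu) (lpoly q)) (- (m.+1)%:Z) = momL mu ('X^m * q).
Proof.
have [S eS] : {S | size q = S} by exists (size q).
have -> : - (m.+1)%:Z = (ldeg (lmul (stieltjes mu) (lpoly q)))%:Z - (S + m.+1)%N%:Z.
  by rewrite /= eS; lia.
rewrite lcoef_lco lco_mul.
have -> : (S + m.+1).+1 = (m.+1 + S.+1)%N by lia.
rewrite big_split_ord /= [X in X + _]big1 ?add0r; last first.
  by move=> i _; rewrite eS ifF ?mulr0 //; have := ltn_ord i; lia.
rewrite (@momL_widen _ (m + S.+1)%N); last first.
  by apply: leq_trans (size_polyMleq _ _) _; rewrite size_polyXn eS; lia.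
rewrite big_split_ord /= [X in _ = X + _]big1 ?add0r; last first.
  by move=> i _; rewrite coefXnM ltn_ord mul0r.
apply: eq_bigr => i _; have hi := ltn_ord i.
rewrite eS ifT; last lia.
rewrite coefXnM ifF; last lia.
by rewrite mulrC; congr (_ * _); congr nth; lia.
Qed.

Variable p : nat -> {poly F}.
Hypothesis hp : orthonormal_ops mu p.

Lemma momL_orth_low k q : (size q <= k)%N -> momL mu (q * p k) = 0.
Proof.
have [hs ho] := hp.
suff: forall d q, (size q <= d)%N -> (d <= k)%N -> momL mu (q * p k) = 0.
  by move=> H h; apply: (H k).
elim=> [|d IH] {}q hq hd.
  by move: hq; rewrite size_poly_leq0 => /eqP ->; rewrite mul0r momL0.
set c := q`_d / (p d)`_d.
rewrite -(subrK (c *: p d) q) mulrDl momLD -scalerAl momLZ.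
rewrite IH ?size_reduce_lead //; last lia.
by rewrite ho (_ : (d == k) = false) ?mulr0 ?addr0 //; lia.
Qed.

Lemma momL_Xn_orth k : momL mu ('X^k * p k) = (lead_coef (p k))^-1.
Proof.
have [hs ho] := hp.
have hX : ('X^k : {poly F})`_k = 1 by rewrite coefXn eqxx.
have hl : lead_coef (p k) = (p k)`_k by rewrite lead_coefE hs.
set c := ('X^k : {poly F})`_k / (p k)`_k.
rewrite -(subrK (c *: p k) 'X^k) mulrDl momLD -scalerAl momLZ.
rewrite momL_orth_low ?size_reduce_lead ?size_polyXn //.
by rewrite ho eqxx mulr1 add0r /c hX mul1r hl.
Qed.

Lemma lcoef_eps k j : lcoef (eps mu p k) j =
  if j < 0 then lcoef (lmul (stieltjes mu) (lpoly (p k))) j else 0.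
Proof.
rewrite /eps lcoefB lcoef_poly; set s := lmul _ _.
case: ifP => h; case: ifP => h2; try lia; last by rewrite subr0.
rewrite /polypart coef_poly; case: ifP => h3.
  by rewrite (_ : (absz j)%:Z = j) ?subrr //; lia.
by rewrite lcoef_default ?subr0 //; lia.
Qed.

Lemma lcoef_eps_above k j : - (k.+1)%:Z < j -> lcoef (eps mu p k) j = 0.
Proof.
move=> hj; rewrite lcoef_eps; case: ifP => // hj0.
have -> : j = - ((absz j).-1.+1)%:Z by lia.
by rewrite lcoef_stieltjes_mul momL_orth_low // size_polyXn; lia.
Qed.

Lemma lcoef_eps_lead k : lcoef (eps mu p k) (- (k.+1)%:Z) = (lead_coef (p k))^-1.
Proof.
by rewrite lcoef_eps (_ : (- (k.+1)%:Z < 0) = true) ?lcoef_stieltjes_mul ?momL_Xn_orth.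
Qed.

Lemma casoratian_eps n :
  lEq (lsub (lmul (eps mu p n) (lpoly (p n.+1))) (lmul (eps mu p n.+1) (lpoly (p n))))
      (cst ((lead_coef (p n))^-1 * lead_coef (p n.+1))).
Proof.
have [hs _] := hp.
set G := eps mu p n; set E := eps mu p n.+1.
set P := lpoly (p n.+1); set Q := lpoly (p n).
have hP j : (n.+1)%:Z < j -> lcoef P j = 0.
  by move=> hj; rewrite lcoef_poly_default // hs; lia.
have hQ j : n%:Z < j -> lcoef Q j = 0.
  by move=> hj; rewrite lcoef_poly_default // hs; lia.
have hGdeg : - (n.+1)%:Z <= (ldeg G)%:Z by lia.
have hEdeg : - (n.+2)%:Z <= (ldeg E)%:Z by lia.
have hPdeg : (n.+1)%:Z <= (ldeg P)%:Z by rewrite /P /= hs; lia.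
have hQdeg : n%:Z <= (ldeg Q)%:Z by rewrite /Q /= hs; lia.
have hGP := lcoef_mul_above hGdeg hPdeg (@lcoef_eps_above n) hP.
have hEQ := lcoef_mul_above hEdeg hQdeg (@lcoef_eps_above n.+1) hQ.
move=> j; rewrite lcoef_cst.
have [hj|hj] := boolP (j < 0).
  have D_poly : lEq (lsub (lmul G P) (lmul E Q))
      (lsub (lmul (lpoly (polypart (lmul (stieltjes mu) P))) Q)
            (lmul (lpoly (polypart (lmul (stieltjes mu) Q))) P)).
    by rewrite /G /E /eps -/P -/Q; ring.
  rewrite (D_poly j) lcoefB !lcoef_mul_neg ?subr0 ?ifF //; try lia;
    by move=> k hk; rewrite lcoef_poly ifF //; lia.
rewrite lcoefB.
have [->|hj0] := eqVneq j 0; last by rewrite hGP ?hEQ ?subr0 //; lia.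
have lead := lcoef_mul_lead hGdeg hPdeg (@lcoef_eps_above n) hP.
rewrite -{1}(addNr (n.+1)%:Z) lead lcoef_eps_lead hEQ ?subr0; last lia.
by rewrite /P lcoef_poly /= [lead_coef (p n.+1)]lead_coefE hs.
Qed.

Lemma acoef_casoratian_eps n :
  lEq (lscale (acoef p n.+1)
         (lsub (lmul (eps mu p n) (lpoly (p n.+1))) (lmul (eps mu p n.+1) (lpoly (p n)))))
      lone.
Proof.
have [hs _] := hp.
have lc_neq0 k : lead_coef (p k) != 0 by rewrite lead_coef_eq0 -size_poly_eq0 hs.
have a_cas : acoef p n.+1 * ((lead_coef (p n))^-1 * lead_coef (p n.+1)) = 1.
  by rewrite /acoef /= mulrACA mulfV ?mulVf ?mulr1.
by rewrite casoratian_eps lscale_cst -cstM a_cas.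
Qed.

End Moments.

(** * The Casoratian identities *)

Lemma lscale2 s : lEq (lscale 2%:R s) (lmul (ladd lone lone) s).
Proof. by rewrite lscale_cst /lone -cstD. Qed.

Lemma lEq_by_relations c1 c2 X Y L R : lEq X lone -> lEq Y lzero ->
  lEq (lsub L R) (ladd (lmul c1 (lsub X lone)) (lmul c2 Y)) -> lEq L R.
Proof.
move=> hX hY h; rewrite hX hY in h.
have -> : lEq L (ladd (lsub L R) R) by ring.
by rewrite h; ring.
Qed.

(* [Theta mu p W V n] unfolds to
   [ltheta W V (eps mu p n) (lpoly (p n)) (lpoly (p n)^`())], and [Omega mu p W V n] to
   [lomega W V (acoef p n) (eps mu p n.-1) (eps mu p n) (lpoly (p n)) (lpoly (p n)^`())
   (lpoly (p n.-1))]. *)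
Definition ltheta (W V : {poly F}) (e P P' : lser F) : lser F :=
  ladd (lmul (lpoly W) (lsub (lmul e P') (lmul (lderiv e) P)))
       (lmul (lpoly (2%:R *: V)) (lmul e P)).

Definition lomega (W V : {poly F}) (a : F) (e0 e1 P1 P1' P0 : lser F) : lser F :=
  ladd (lscale a (lmul (lpoly W) (lsub (lmul e0 P1') (lmul (lderiv e1) P0))))
       (lscale a (lmul (lpoly V) (ladd (lmul e0 P1) (lmul e1 P0)))).

Section CasoratianIdentities.
Variables (W V : {poly F}) (a : F) (G E P Q P' Q' : lser F).
Hypotheses (dP : lEq (lderiv P) P') (dQ : lEq (lderiv Q) Q').
Hypothesis aD1 : lEq (lscale a (lsub (lmul G P) (lmul E Q))) lone.
Hypothesis dD0 : lEq (lderiv (lsub (lmul G P) (lmul E Q))) lzero.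

Let Th := ltheta W V E P P'.
Let Th1 := ltheta W V G Q Q'.
Let Om := lomega W V a G E P P' Q.

Lemma casoratian_identities :
  [/\ lEq (lmul (lpoly W) P') (lsub (lmul (lsub Om (lpoly V)) P) (lscale a (lmul Th Q))),
      lEq (lmul (lpoly W) Q') (lsub (lscale a (lmul Th1 P)) (lmul (ladd Om (lpoly V)) Q)),
      lEq (lmul (lpoly W) (lderiv E))
          (lsub (lmul (ladd Om (lpoly V)) E) (lscale a (lmul Th G)))
    & lEq (lmul (lpoly W) (lderiv G))
          (lsub (lscale a (lmul Th1 E)) (lmul (lsub Om (lpoly V)) G))].
Proof.
have dD : lEq (lsub (ladd (lmul (lderiv G) P) (lmul G P'))
                    (ladd (lmul (lderiv E) Q) (lmul E Q'))) lzero.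
  by rewrite -dP -dQ -dD0 /lsub lderivD lderivN !lderivM.
have aD : lEq (lmul (cst a) (lsub (lmul G P) (lmul E Q))) lone by rewrite -lscale_cst.
rewrite /Th /Th1 /Om /ltheta /lomega.
split; setoid_rewrite lpolyZ; setoid_rewrite lscale2; setoid_rewrite lscale_cst.
- apply: (lEq_by_relations
    (c1 := lsub lzero (ladd (lmul (lpoly W) P') (lmul (lpoly V) P)))
    (c2 := lzero) aD dD); ring.
- apply: (lEq_by_relations
    (c1 := lsub lzero (ladd (lmul (lpoly W) Q') (lmul (lpoly V) Q)))
    (c2 := lmul (cst a) (lmul (lpoly W) Q)) aD dD); ring.
- apply: (lEq_by_relations
    (c1 := lsub lzero (lsub (lmul (lpoly W) (lderiv E)) (lmul (lpoly V) E)))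
    (c2 := lzero) aD dD); ring.
- apply: (lEq_by_relations
    (c1 := lsub lzero (lsub (lmul (lpoly W) (lderiv G)) (lmul (lpoly V) G)))
    (c2 := lmul (cst a) (lmul (lpoly W) G)) aD dD); ring.
Qed.

End CasoratianIdentities.

End LaurentSeries.

Arguments lzero {F}.
Arguments lone {F}.

Theorem mainTheorem2 (R : realType) (mu : nat -> R[i])
    (p : nat -> {poly R[i]}) (W V U : {poly R[i]}) :
  hankel_nonzero mu -> orthonormal_ops mu p ->
  W != 0 -> semiclassical mu W V U ->
  forall n : nat, (0 < n)%N ->
  let a := acoef p n in
  let Th := Theta mu p W V n in
  let Th1 := Theta mu p W V n.-1 in
  let Om := Omega mu p W V n in
  [/\ lEq (lpoly (W * (p n)^`()))
          (lsub (lmul (lsub Om (lpoly V)) (lpoly (p n)))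
                (lscale a (lmul Th (lpoly (p n.-1))))),
      lEq (lpoly (W * (p n.-1)^`()))
          (lsub (lscale a (lmul Th1 (lpoly (p n))))
                (lmul (ladd Om (lpoly V)) (lpoly (p n.-1)))),
      lEq (lmul (lpoly W) (lderiv (eps mu p n)))
          (lsub (lmul (ladd Om (lpoly V)) (eps mu p n))
                (lscale a (lmul Th (eps mu p n.-1))))
    & lEq (lmul (lpoly W) (lderiv (eps mu p n.-1)))
          (lsub (lscale a (lmul Th1 (eps mu p n)))
                (lmul (lsub Om (lpoly V)) (eps mu p n.-1)))].
Proof.
move=> _ hp _ _ [//|n] _ a Th Th1 Om /=.
have aD1 := acoef_casoratian_eps hp n.
have dD0 : lEq (lderiv (lsub (lmul (eps mu p n) (lpoly (p n.+1)))
                             (lmul (eps mu p n.+1) (lpoly (p n))))) lzero.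
  exact: lEq_trans (lderiv_Proper (casoratian_eps hp n)) (lderiv_cst _).
have [hP hQ hE hG] :=
  casoratian_identities W V (lpoly_deriv (p n.+1)) (lpoly_deriv (p n)) aD1 dD0.
by split; [exact: lEq_trans (lpolyM _ _) hP | exact: lEq_trans (lpolyM _ _) hQ | | ].
Qed.
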